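(* Let $(\theta_1,\mathbf{X}_1),\dots,(\theta_B,\mathbf{X}_B)$ be i.i.d. with $\theta_b \sim r$, where $r$ has a density with $r(\theta)>0$ on $\Theta$, and $\mathbf{X}_b\mid\theta_b$ distributed according to the statistical model at $\theta_b$. Let $\mathcal{A}_B$ be the (data-dependent) partition of $\Theta$ produced by TRUST or TRUST++ from these simulations, and for $\theta'\in\Theta$ let $A(\theta')$ be its element containing $\theta'$, $I_{A(\theta')} = \{b : \theta_b \in A(\theta')\}$, $$\widehat H_B(t\mid\theta') = \frac{1}{|I_{A(\theta')}|+1}\Big(\sum_{b\in I_{A(\theta')}}\mathbb{I}\big(\tau(\mathbf{X}_b,\theta_b)\le t\big)+1\Big),$$ $\widehat C_{\theta',B} = \inf\{t:\widehat H_B(t\mid\theta')\ge\alpha\}$, and $\widehat R_B(\mathbf{X}) = \{\theta'\in\Theta : \tau(\mathbf{X},\theta')\ge \widehat C_{\theta',B}\}$. Assume the uniform consistency condition: for every $\varepsilon>0$ and $\delta>0$ there is $B_0$ such that for all $B\ge B_0$, $$\mathbb{P}\Big(\sup_{t\in\mathbb{R},\,\theta'\in\Theta}\big|\widehat H_B(t\mid\theta') - H(t\mid\theta')\big|\le\varepsilon\Big)\ge 1-\delta.$$ Then for every fixed $\theta\in\Theta$, with $\mathbf{X}$ drawn from the model at $\theta$ independently of the simulations, $$\lim_{B\to\infty}\mathbb{P}\big(\theta\in\widehat R_B(\mathbf{X})\mid\theta\big) = 1-\alpha.$$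
   Context: A statistical model gives, for each parameter $\theta\in\Theta$, a distribution of the data $\mathbf{X}\in\mathcal{X}$; $\alpha\in(0,1)$. A fixed measurable function $\tau:\mathcal{X}\times\Theta\to\mathbb{R}$ (a test statistic) is given; $H(t\mid\theta) := \mathbb{P}(\tau(\mathbf{X},\theta)\le t\mid\theta)$ is continuous in $t$ for every $\theta$. TRUST: a regression tree is fit with input $\theta$ and response $\tau(\mathbf{X},\theta)$ on the pairs $(\theta_b,\tau(\mathbf{X}_b,\theta_b))$; its leaves form a partition of $\Theta$. TRUST++: $K$ such regression trees are fit on bootstrap resamples of the simulated data, and two parameters $\theta,\theta'$ are placed in the same partition element iff they fall in the same leaf in all $K$ trees. In both cases the partition has the property that $\widehat H_B(\cdot\mid\theta') = \widehat H_B(\cdot\mid\theta)$ whenever $\theta'\in A(\theta)$. *)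

From HB Require Import structures.
From mathcomp Require Import all_boot all_order all_algebra.
From mathcomp Require Import all_classical all_reals all_analysis.
Set Implicit Arguments. Unset Strict Implicit. Unset Printing Implicit Defensive.
Import Order.TTheory GRing.Theory Num.Theory.
Import numFieldNormedType.Exports.
Local Open Scope classical_set_scope.
Local Open Scope ring_scope.

Section TRUST.
Context {R : realType} {dT dX dO : measure_display}
  {Theta : measurableType dT} {Xsp : measurableType dX} {Omega : measurableType dO}.

Definition Hcdf (model : R.-pker Theta ~> Xsp) (tau : Xsp -> Theta -> R)
  (theta : Theta) (t : R) : R :=
  fine (model theta [set x | tau x theta <= t]).

(* Cell-membership in the partition A_B : two parameters are in the same
   element iff they receive the same cell label. *)
Definition Hhat (tau : Xsp -> Theta -> R) (cell : Theta -> nat)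
  (sims : seq (Theta * Xsp)) (theta' : Theta) (t : R) : R :=
  ((count (fun z => (cell z.1 == cell theta') && (tau z.2 z.1 <= t)) sims)%:R + 1)
  / ((count (fun z => cell z.1 == cell theta') sims)%:R + 1).

Definition Chat (alpha : R) (tau : Xsp -> Theta -> R) (cell : Theta -> nat)
  (sims : seq (Theta * Xsp)) (theta' : Theta) : \bar R :=
  ereal_inf (EFin @` [set t | alpha <= Hhat tau cell sims theta' t]).

Definition Rhat (alpha : R) (tau : Xsp -> Theta -> R) (cell : Theta -> nat)
  (sims : seq (Theta * Xsp)) (x : Xsp) : set Theta :=
  [set theta' | (Chat alpha tau cell sims theta' <= (tau x theta')%:E)%E].

Definition first_sims (Z : nat -> Omega -> Theta * Xsp) (B : nat) (w : Omega)
  : seq (Theta * Xsp) := [seq Z b w | b <- iota 0 B].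

Definition mutually_indep (P : probability Omega R) (Z : nat -> Omega -> Theta * Xsp) :=
  forall (n : nat) (S : nat -> set (Theta * Xsp)),
    (forall i, measurable (S i)) ->
    P (\bigcap_(i in [set k | (k < n)%N]) (Z i @^-1` S i)) =
    (\prod_(i < n) P (Z i @^-1` S i))%E.

(* X independent of the whole sequence Z (tested on the generating pi-system
   of finite-dimensional cylinder events) *)
Definition indep_of_seq (P : probability Omega R) (X : Omega -> Xsp)
  (Z : nat -> Omega -> Theta * Xsp) :=
  forall (n : nat) (E : set Xsp) (S : nat -> set (Theta * Xsp)),
    measurable E -> (forall i, measurable (S i)) ->
    P (X @^-1` E `&` \bigcap_(i in [set k | (k < n)%N]) (Z i @^-1` S i)) =
    (P (X @^-1` E) * P (\bigcap_(i in [set k | (k < n)%N]) (Z i @^-1` S i)))%E.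

End TRUST.

From HB Require Import structures.
From mathcomp Require Import all_boot all_order all_algebra.
From mathcomp Require Import all_classical all_reals all_analysis.
From mathcomp Require Import lra.
Import Order.TTheory GRing.Theory Num.Theory.
Import numFieldNormedType.Exports.
Local Open Scope classical_set_scope.
Local Open Scope ring_scope.

(* Write F := H(. | theta), the cdf of T := tau(X, theta); being continuous, it
   attains every level in (0, 1).  On an event G where \hat H_B(. | theta) is
   uniformly eps-close to F, theta lies in \hat R_B(X) whenever
   F(T) >= alpha + eps, and only if T exceeds the (alpha - 2 eps)-quantile of F.
   Hence the coverage probability is within 3 eps + P(~ G) of 1 - alpha, and
   uniform consistency makes both terms small.  The consistency hypothesis is
   used pathwise. *)

Section fine_probability.
Context {d : measure_display} {Omega : measurableType d} {R : realType}
  (P : probability Omega R).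

Lemma fine_le_measure {A B : set Omega} : measurable A -> measurable B ->
  A `<=` B -> fine (P A) <= fine (P B).
Proof.
move=> mA mB AB; rewrite fine_le ?fin_num_measure //.
by rewrite le_measure ?inE.
Qed.

Lemma fine_measureU2 {A B : set Omega} : measurable A -> measurable B ->
  fine (P (A `|` B)) <= fine (P A) + fine (P B).
Proof.
move=> mA mB; rewrite -fineD ?fin_num_measure //.
apply: fine_le; first exact/fin_num_measure/measurableU.
- by rewrite fin_numD !fin_num_measure.
- exact: measureU2.
Qed.

Lemma fine_probability_setC {A : set Omega} : measurable A ->
  fine (P (~` A)) = 1 - fine (P A).
Proof. by move=> mA; rewrite probability_setC // fineB ?fin_num_measure. Qed.

Lemma fine_measure_sandwich {A B E G : set Omega} :
  measurable A -> measurable B -> measurable E -> measurable G ->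
  A `&` G `<=` E -> E `&` G `<=` B ->
  fine (P A) - fine (P (~` G)) <= fine (P E) <= fine (P B) + fine (P (~` G)).
Proof.
move=> mA mB mE mG AGE EGB; have mGC := measurableC mG.
have split_G (S : set Omega) : S `<=` (S `&` G) `|` ~` G.
  by move=> w Sw; have [Gw|] := pselect (G w); [left|right].
apply/andP; split.
- rewrite lerBlDr; apply: le_trans _ (fine_measureU2 mE mGC).
  apply: fine_le_measure => //; first exact: measurableU.
  by move=> w /split_G [/AGE|]; [left|right].
- apply: le_trans _ (fine_measureU2 mB mGC).
  apply: fine_le_measure => //; first exact: measurableU.
  by move=> w /split_G [/EGB|]; [left|right].
Qed.

End fine_probability.

Section cdf_quantile.
Context {d : measure_display} {Omega : measurableType d} {R : realType}
  {P : probability Omega R}.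
Variable X : {RV P >-> R}.

Lemma measurable_rv_gt r : measurable [set w | r < X w].
Proof.
have -> : [set w | r < X w] = X @^-1` `]r, +oo[.
  by apply/seteqP; split=> w /=; rewrite in_itv /= andbT.
exact: measurable_funPTI.
Qed.

Lemma cdfE r : cdf X r = P [set w | X w <= r].
Proof.
by rewrite /cdf /distribution /pushforward; congr (P _); apply/seteqP;
  split=> w /=; rewrite in_itv.
Qed.

Lemma ccdfE r : ccdf X r = P [set w | r < X w].
Proof.
by rewrite /ccdf /distribution /pushforward; congr (P _); apply/seteqP; split=> w /=;
  rewrite in_itv /= andbT.
Qed.

Lemma fine_ccdf r : fine (ccdf X r) = 1 - fine (cdf X r).
Proof. by rewrite ccdf_1_cdf fineB ?fin_num_measure. Qed.

Lemma fine_cdf_nondecreasing : nondecreasing_fun (fun r => fine (cdf X r)).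
Proof. by move=> r s rs; rewrite fine_le ?fin_num_measure ?cdf_nondecreasing. Qed.

Lemma continuous_cdf_surj v : continuous (fun r => fine (cdf X r)) ->
  0 < v < 1 -> exists c, fine (cdf X c) = v.
Proof.
move=> cF /andP[v0 v1].
have [_ /cvgrPdist_lt /(_ (1 - v))] := (fine_cvgP _ _).1 (cvg_cdfy1 X).
rewrite subr_gt0 => /(_ v1) /filter_ex [b /=]; rewrite ltr_distlC subKr => /andP[vb _].
have [_ /cvgrPdist_lt /(_ v v0)] := (fine_cvgP _ _).1 (cvg_cdfNy0 X).
move=> /filter_ex [a /=]; rewrite ltr_distlC sub0r add0r => /andP[_ av].
have ab : Num.min a b <= b by rewrite ge_min lexx orbT.
have amin : Num.min a b <= a by rewrite ge_min lexx.
have Fv : Num.min (fine (cdf X (Num.min a b))) (fine (cdf X b)) <= v <=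
          Num.max (fine (cdf X (Num.min a b))) (fine (cdf X b)).
  rewrite ge_min le_max (ltW vb) orbT andbT; apply/orP; left.
  by rewrite (le_trans (fine_cdf_nondecreasing _ _ amin)) ?ltW.
have [c _ Fc] := IVT ab (continuous_subspaceT cF) Fv.
by exists c.
Qed.
End cdf_quantile.

Section Hhat_Rhat.
Context {R : realType} {dT dX : measure_display}
  {Theta : measurableType dT} {Xsp : measurableType dX}.
Context {alpha : R} {tau : Xsp -> Theta -> R} {cell : Theta -> nat}
  {sims : seq (Theta * Xsp)} {th : Theta}.
Local Notation Hh := (Hhat tau cell sims th).
Local Notation Rh := (Rhat alpha tau cell sims).

Lemma Hhat_nondecreasing : nondecreasing_fun Hh.
Proof.
move=> s t st; rewrite /Hhat ler_pM2r ?invr_gt0 ?ltr_wpDl // lerD2r ler_nat.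
by apply: sub_count => z /andP[-> /= zs]; apply: le_trans st.
Qed.

Lemma Rhat_of_Hhat_ge x : alpha <= Hh (tau x th) -> Rh x th.
Proof. by move=> h; apply: ereal_inf_lbound; exists (tau x th). Qed.

Lemma Hhat_ge_of_Rhat x c : Rh x th -> tau x th < c -> alpha <= Hh c.
Proof.
move=> Rx xc; have : (Chat alpha tau cell sims th < c%:E)%E.
  by apply: le_lt_trans Rx _; rewrite lte_fin.
move=> /ereal_inf_lt [_ [s hs <-]].
by rewrite lte_fin => /ltW /Hhat_nondecreasing; apply: le_trans.
Qed.

Context {F : R -> R} {eps : R}.
Hypothesis Hhat_near : forall t, `|Hh t - F t| <= eps.

Lemma Rhat_of_approx_ge x : alpha + eps <= F (tau x th) -> Rh x th.
Proof.
move=> h; apply: Rhat_of_Hhat_ge.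
by have := Hhat_near (tau x th); rewrite ler_distl => /andP[+ _]; lra.
Qed.

Lemma approx_ge_of_Rhat x c : Rh x th -> tau x th < c -> alpha - eps <= F c.
Proof.
move=> Rx /(Hhat_ge_of_Rhat _ _ Rx) h.
by have := Hhat_near c; rewrite ler_distl => /andP[_]; lra.
Qed.

End Hhat_Rhat.

Section coverage.
Context {R : realType} {dT dX dO : measure_display} {Theta : measurableType dT}
  {Xsp : measurableType dX} {Omega : measurableType dO}.
Context {P : probability Omega R} {alpha eps : R} {tau : Xsp -> Theta -> R}
  {theta : Theta} {cell : Omega -> Theta -> nat}
  {sims : Omega -> seq (Theta * Xsp)} {X : Omega -> Xsp} {T : {RV P >-> R}}.
Hypothesis T_tau : forall w, T w = tau (X w) theta.
Hypothesis cdf_continuous : continuous (fun t => fine (cdf T t)).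
Context {G : set Omega}.
Hypothesis mG : measurable G.
Hypothesis Hhat_near : forall w, G w -> forall t,
  `|Hhat tau (cell w) (sims w) theta t - fine (cdf T t)| <= eps.

Let E := [set w | Rhat alpha tau (cell w) (sims w) (X w) theta].
Hypothesis mE : measurable E.

Lemma coverage_error_le : 0 < eps -> alpha + eps < 1 -> 3 * eps < alpha ->
  `|fine (P E) - (1 - alpha)| <= 3 * eps + fine (P (~` G)).
Proof.
move=> eps_gt0 alpha_eps_lt1 eps_lt_alpha; pose F t := fine (cdf T t).
have quantile v : 0 < v < 1 -> exists c, F c = v.
  exact: continuous_cdf_surj.
have [chi Fchi] := quantile (alpha + eps) ltac:(apply/andP; split; lra).
have [c1 Fc1] := quantile (alpha - 3 * eps) ltac:(apply/andP; split; lra).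
have [c2 Fc2] := quantile (alpha - 2 * eps) ltac:(apply/andP; split; lra).
(* Rhat only gives T >= c2; the lower level c1 turns this into an open ray. *)
have c12 : c1 < c2.
  rewrite ltNge; apply/negP => /(fine_cdf_nondecreasing T); rewrite -/(F _) -/(F _).
  by rewrite Fc1 Fc2; lra.
have lower : [set w | chi < T w] `&` G `<=` E.
  move=> w [/= /ltW /(fine_cdf_nondecreasing T) chiT /Hhat_near near_w].
  apply: (Rhat_of_approx_ge near_w); rewrite -T_tau; rewrite -/(F _) in chiT; lra.
have upper : E `&` G `<=` [set w | c1 < T w].
  move=> w [/= Ew /Hhat_near near_w]; rewrite ltNge; apply/negP => Tc1.
  have := approx_ge_of_Rhat near_w _ c2 Ew; rewrite -T_tau.
  by move=> /(_ (le_lt_trans Tc1 c12)); rewrite -/(F _) Fc2; lra.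
have := fine_measure_sandwich P (measurable_rv_gt T chi) (measurable_rv_gt T c1)
  mE mG lower upper.
rewrite -!ccdfE !fine_ccdf -/(F chi) -/(F c1) Fchi Fc1 ler_distl.
by move=> /andP[]; lra.
Qed.

End coverage.

Lemma Hcdf_cdfE {R : realType} {dT dX dO : measure_display}
    {Theta : measurableType dT} {Xsp : measurableType dX}
    {Omega : measurableType dO} {P : probability Omega R}
    (model : R.-pker Theta ~> Xsp) (tau : Xsp -> Theta -> R) (theta : Theta)
    (X : Omega -> Xsp) (T : {RV P >-> R}) :
  measurable_fun setT (fun x => tau x theta) ->
  (forall E, measurable E -> P (X @^-1` E) = model theta E) ->
  (forall w, T w = tau (X w) theta) ->
  Hcdf model tau theta = fun t => fine (cdf T t).
Proof.
move=> mtau lawX T_tau; apply/funext => t; rewrite /Hcdf.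
have -> : [set x | tau x theta <= t] = (fun x => tau x theta) @^-1` `]-oo, t].
  by apply/seteqP; split=> x /=; rewrite in_itv.
rewrite cdfE -lawX; last by rewrite -[X in measurable X]setTI; exact: mtau.
by congr (fine (P _)); apply/seteqP; split=> w /=; rewrite in_itv /= T_tau.
Qed.

Theorem theorem3 (R : realType) (dT dX dO : measure_display)
  (Theta : measurableType dT) (Xsp : measurableType dX) (Omega : measurableType dO)
  (P : probability Omega R)
  (model : R.-pker Theta ~> Xsp)
  (tau : Xsp -> Theta -> R) (alpha : R)
  (mu : {measure set Theta -> \bar R}) (r : Theta -> R)
  (Z : nat -> Omega -> Theta * Xsp)
  (part : nat -> Omega -> Theta -> nat) :
  (0 < alpha < 1) ->
  measurable_fun setT (fun p : Xsp * Theta => tau p.1 p.2) ->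
  (forall th, continuous (Hcdf model tau th)) ->
  (* prior r : a probability density w.r.t. mu, positive on Theta *)
  measurable_fun setT r ->
  (forall th, 0 < r th) ->
  (\int[mu]_(th in setT) (r th)%:E = 1)%E ->
  (* (theta_b, X_b) i.i.d., theta_b ~ r, X_b | theta_b ~ model theta_b *)
  (forall b, measurable_fun setT (Z b)) ->
  mutually_indep P Z ->
  (forall b (A : set Theta) (E : set Xsp), measurable A -> measurable E ->
     P (Z b @^-1` (A `*` E)) = (\int[mu]_(th in A) ((r th)%:E * model th E))%E) ->
  (* uniform consistency of \hat H_B *)
  (forall eps delta : R, 0 < eps -> 0 < delta ->
     exists B0 : nat, forall B : nat, (B0 <= B)%N ->
       exists G : set Omega, measurable G /\ ((1 - delta)%:E <= P G)%E /\
         forall w, G w ->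
           forall (t : R) (th' : Theta),
             `| Hhat tau (part B w) (first_sims Z B w) th' t - Hcdf model tau th' t |
               <= eps) ->
  forall (theta : Theta) (X : Omega -> Xsp),
    measurable_fun setT X ->
    (forall E, measurable E -> P (X @^-1` E) = model theta E) ->
    indep_of_seq P X Z ->
    (forall B : nat, measurable
       [set w | Rhat alpha tau (part B w) (first_sims Z B w) (X w) theta]) ->
    (fun B : nat =>
       fine (P [set w | Rhat alpha tau (part B w) (first_sims Z B w) (X w) theta]))
      @ \oo --> 1 - alpha.
Proof.
move=> /andP[alpha_gt0 alpha_lt1] mtau cH _ _ _ _ _ _ consistent theta X mX lawX _ mE.
have mtau_theta : measurable_fun setT (fun x => tau x theta).
  exact: measurableT_comp mtau (pair2_measurable theta).
pose T : {RV P >-> R} := mfun_Sub (mem_set (measurableT_comp mtau_theta mX)).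
have HT := Hcdf_cdfE model _ _ _ T mtau_theta lawX (fun w => erefl).
apply/cvgrPdist_le => g g_gt0.
pose eps := Num.min (g / 4) (Num.min ((1 - alpha) / 2) (alpha / 4)).
have eps_g : eps <= g / 4 by rewrite /eps ge_min lexx.
have eps_alpha1 : eps <= (1 - alpha) / 2 by rewrite /eps !ge_min lexx orbT.
have eps_alpha : eps <= alpha / 4 by rewrite /eps !ge_min lexx !orbT.
have eps_gt0 : 0 < eps by rewrite /eps !lt_min; apply/and3P; split; lra.
have [B0 HB0] := consistent eps (g / 4) eps_gt0 ltac:(lra).
exists B0 => // B /= /HB0 [G [mG [PG HG]]].
have PGC : fine (P (~` G)) <= g / 4.
  move: PG; rewrite fine_probability_setC // -[P G]fineK ?fin_num_measure //.
  by rewrite lee_fin; lra.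
have cdfT : continuous (fun t => fine (cdf T t)) by have := cH theta; rewrite HT.
have near_G w : G w -> forall t,
    `|Hhat tau (part B w) (first_sims Z B w) theta t - fine (cdf T t)| <= eps.
  by move=> Gw t; move: (HG w Gw t theta); rewrite HT.
have := coverage_error_le (T := T) (fun w => erefl) cdfT mG near_G (mE B).
rewrite distrC => /(_ eps_gt0 ltac:(lra) ltac:(lra)) /le_trans; apply; lra.
Qed.
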